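(* Let $X$ be an infinite set and $\{X_0,\dots,X_n\}$ a partition of $X$. Let $(x_k)_{k\in\omega}$ and $(y_k)_{k\in\omega}$ be sequences in the Boolean group $[X]^{<\omega}$ such that the family $\{x_k:k\in\omega\}\cup\{y_k:k\in\omega\}$ (indexed by $k$ and by which sequence it comes from) is linearly independent, and such that for every $p\in\{0,\dots,n\}$ both families $\{x_k\cap X_p:k\in\omega\}$ and $\{y_k\cap X_p:k\in\omega\}$ are linearly independent. Then there exist a strictly increasing sequence $(k_m)_{m\in\omega}$ in $\omega$ and $n_0\in\{0,\dots,n\}$ such that the family $\{x_{k_m}\cap X_{n_0}:m\in\omega\}\cup\{y_{k_m}\cap X_{n_0}:m\in\omega\}$ is linearly independent.
   Context: For a set $X$, $[X]^{<\omega}$ denotes the set of finite subsets of $X$, regarded as a Boolean group (a vector space over the two-element field $2=\{0,1\}$) with symmetric difference $\triangle$ as operation and $\emptyset$ as neutral element. Linear independence is over the field $2$; a linearly independent indexed family has pairwise distinct members. *)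

From mathcomp Require Import all_boot.
From mathcomp Require Import boolp classical_sets cardinality.
Set Implicit Arguments. Unset Strict Implicit. Unset Printing Implicit Defensive.
Local Open Scope classical_set_scope.

(* Symmetric difference: the group operation of the Boolean group [X]^{<omega}. *)
Definition symdiff {X : Type} (A B : set X) : set X := (A `\` B) `|` (B `\` A).

(* A family (f i)_{i : I} of elements of the Boolean group (vector space over 2)
   is linearly independent iff no nonempty finite set of distinct indices has
   members summing (symmetric difference) to the neutral element set0. *)
Definition lin_indep {X : Type} {I : eqType} (f : I -> set X) : Prop :=
  forall s : seq I, uniq s -> s <> [::] ->
    \big[symdiff/set0]_(i <- s) f i <> set0.

Definition join_fam {X : Type} (x y : nat -> set X) : nat + nat -> set X :=
  fun i => match i with inl k => x k | inr k => y k end.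

Definition is_partition {X : Type} (n : nat) (P : 'I_n.+1 -> set X) : Prop :=
  (forall p, P p !=set0) /\
  (forall p q, p != q -> P p `&` P q = set0) /\
  (forall z : X, exists p, P p z).

From mathcomp Require Import all_boot finmap.
From mathcomp Require Import boolp classical_sets cardinality.
Set Implicit Arguments. Unset Strict Implicit. Unset Printing Implicit Defensive.
Local Open Scope classical_set_scope.

(* Call u, v escaping when, for every finite F, infinitely many k have none of
   u k, v k, symdiff (u k) (v k) contained in F.  An escaping pair has a jointly
   independent subsequence: pick k_m greedily so that all three sets escape the
   union of the sets picked before; in a nonempty finite sum, the terms of
   largest index then contribute a point outside that union.  Since an
   injective sequence has only finitely many members inside a finite set,
   independent u, v fail to be escaping only when symdiff (u k) (v k) eventually
   stays in a fixed finite set.  If that happened on every piece P p, then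
   symdiff (x k) (y k), covered by the pieces' symmetric differences, would also
   eventually stay in a finite set, contradicting the injectivity of
   k |-> symdiff (x k) (y k) given by the joint independence of x and y. *)

Lemma count_pred2 (I : eqType) (p : pred I) (a b : I) (s : seq I) :
  a != b -> uniq s -> {in s, forall i, p i -> (i == a) || (i == b)} ->
  count p s = ((a \in s) && p a) + ((b \in s) && p b).
Proof.
move=> ab; elim: s => //= i s IH /andP[i_s us] sub.
rewrite IH //; last by move=> j js; apply: sub; rewrite inE js orbT.
rewrite !inE; have [pi|npi] := boolP (p i).
  case/orP: (sub i (mem_head i s) pi) => /eqP ?; subst i.
    by rewrite eqxx (eq_sym b) (negbTE ab) (negbTE i_s) pi.
  by rewrite eqxx (negbTE ab) (negbTE i_s) pi addnCA.
have not_i c : (c == i) && p c = false by case: eqP => // ->; apply: negbTE.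
by rewrite !andb_orl !not_i.
Qed.

Section BooleanGroup.
Variable X : Type.

Lemma asbool_symdiff (A B : set X) z :
  `[< symdiff A B z >] = `[< A z >] (+) `[< B z >].
Proof.
rewrite /symdiff /= asbool_or !asbool_and !asbool_neg.
by case: asboolP; case: asboolP.
Qed.

Lemma asbool_big_symdiff (I : Type) (f : I -> set X) (s : seq I) z :
  `[< (\big[symdiff/set0]_(i <- s) f i) z >] = odd (count (fun i => `[< f i z >]) s).
Proof.
elim: s => [|i s IH]; first by rewrite big_nil asboolF.
by rewrite big_cons asbool_symdiff IH /= oddD oddb.
Qed.

Lemma big_symdiff_eq0 (I : Type) (f : I -> set X) (s : seq I) :
  \big[symdiff/set0]_(i <- s) f i = set0 <->
  forall z, ~~ odd (count (fun i => `[< f i z >]) s).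
Proof.
split => [s0 z | even_s]; first by rewrite -asbool_big_symdiff s0 asboolF.
by apply/seteqP; split => // z; rewrite -[_ z]asboolE asbool_big_symdiff (negbTE (even_s z)).
Qed.

Lemma lin_indep_inj (u : nat -> set X) : lin_indep u -> injective u.
Proof.
move=> indep_u j k ujk; apply/eqP/negPn/negP => jk.
apply: (indep_u [:: j; k]) => //=; first by rewrite inE jk.
by apply/big_symdiff_eq0 => z /=; rewrite ujk addn0 addnn odd_double.
Qed.

Lemma lin_indep_join_symdiff_inj (x y : nat -> set X) :
  lin_indep (join_fam x y) -> injective (fun k => symdiff (x k) (y k)).
Proof.
move=> indep_xy j k /= xyjk; apply/eqP/negPn/negP => jk.
apply: (indep_xy [:: inl j; inr j; inl k; inr k]) => //=.
  by rewrite !inE /= !negb_or !eqE /= jk.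
apply/big_symdiff_eq0 => z /=.
have := congr1 (fun A : set X => `[< A z >]) xyjk; rewrite /= !asbool_symdiff.
by rewrite addn0 !oddD !oddb addbA => ->; rewrite addbb.
Qed.

Definition sum_idx (i : nat + nat) : nat := match i with inl k | inr k => k end.

Definition lin_indep_below (w : nat + nat -> set X) (m : nat) : Prop :=
  forall s, uniq s -> s <> [::] -> all (fun i => sum_idx i < m) s ->
    \big[symdiff/set0]_(i <- s) w i <> set0.

Lemma lin_indep_belowP (w : nat + nat -> set X) :
  (forall m, lin_indep_below w m) -> lin_indep w.
Proof.
move=> below s us sn; apply: (below (\max_(i <- s) sum_idx i).+1) => //.
by apply/allP => i si; rewrite ltnS; apply: leq_bigmax_seq.
Qed.

Lemma lin_indep_below_step (w : nat + nat -> set X) (F : set X) m :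
  lin_indep_below w m -> (forall i, sum_idx i < m -> w i `<=` F) ->
  ~ w (inl m) `<=` F -> ~ w (inr m) `<=` F ->
  ~ symdiff (w (inl m)) (w (inr m)) `<=` F -> lin_indep_below w m.+1.
Proof.
move=> below lowF lF rF lrF s us sn lt_s s0.
have /big_symdiff_eq0 even_s := s0.
have top_count z : ~ F z -> count (fun i => `[< w i z >]) s =
    ((inl m \in s) && `[< w (inl m) z >]) + ((inr m \in s) && `[< w (inr m) z >]).
  move=> Fz; apply: count_pred2 => // i si /asboolP wiz.
  move: (allP lt_s i si); rewrite ltnS leq_eqVlt => /orP[/eqP|/lowF/(_ z wiz)//].
  by case: i {si wiz} => k /= ->; rewrite eqxx ?orbT.
have [ls|ls] := boolP (inl m \in s); have [rs|rs] := boolP (inr m \in s).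
- have /nonsubset[z [lrz Fz]] := lrF.
  move: (even_s z); rewrite top_count // ls rs oddD !oddb -asbool_symdiff.
  by rewrite asboolT.
- have /nonsubset[z [lz Fz]] := lF.
  by move: (even_s z); rewrite top_count // ls (negbTE rs) addn0 oddb asboolT.
- have /nonsubset[z [rz Fz]] := rF.
  by move: (even_s z); rewrite top_count // rs (negbTE ls) oddb asboolT.
- apply: (below s us sn _ s0); apply/allP => i si.
  move: (allP lt_s i si); rewrite ltnS leq_eqVlt => /orP[/eqP|//].
  by case: i si => k si /= km; subst k; rewrite si in ls rs.
Qed.

End BooleanGroup.

Lemma finite_subsets (X : Type) (F : set X) :
  finite_set F -> finite_set [set B | B `<=` F].
Proof.
elim/Pchoice: X F => X F finF.
suff -> : [set B | B `<=` F] =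
    (fun S : {fset X} => [set` S]) @` [set` fpowerset (fset_set F)].
  exact/finite_image/finite_fset.
apply/seteqP; split => [B BF | _ [S + <-]].
- have finB := sub_finite_set BF finF.
  exists (fset_set B); last exact: fset_setK.
  by rewrite /= fpowersetE -fset_set_sub.
- rewrite /= fpowersetE => /fsubsetP SF z /SF.
  by rewrite in_fset_set // inE.
Qed.

Lemma finite_nat_bounded (A : set nat) :
  finite_set A -> exists M, forall k, A k -> k < M.
Proof.
case/finite_seqP => s ->; exists (\max_(k <- s) k).+1 => k sk.
by rewrite ltnS; apply: (leq_bigmax_seq (F := id)).
Qed.

Lemma injective_eventually_not_sub (X : Type) (f : nat -> set X) (F : set X) :
  injective f -> finite_set F -> exists M, forall k, M <= k -> ~ f k `<=` F.
Proof.
move=> finj finF.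
have [M hM] := finite_nat_bounded (finite_preimage (in2W finj) (finite_subsets finF)).
by exists M => k Mk fkF; move: (hM k fkF); rewrite ltnNge Mk.
Qed.

Definition eventually_in_finite {X : Type} (f : nat -> set X) : Prop :=
  exists F N, finite_set F /\ forall k, N <= k -> f k `<=` F.

Lemma injective_not_eventually_in_finite (X : Type) (f : nat -> set X) :
  injective f -> ~ eventually_in_finite f.
Proof.
move=> finj [F [N [finF subF]]].
have [M escM] := injective_eventually_not_sub finj finF.
by apply: (escM (maxn N M)); [exact: leq_maxr | apply/subF/leq_maxl].
Qed.

Lemma eventually_in_finite_sub (X : Type) (f h : nat -> set X) :
  (forall k, h k `<=` f k) -> eventually_in_finite f -> eventually_in_finite h.
Proof.
by move=> hf [F [N [finF subF]]]; exists F, N; split => // k /subF; apply: subset_trans.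
Qed.

Lemma eventually_in_finite_bigcup (X : Type) (I : finType) (f : I -> nat -> set X) :
  (forall i, eventually_in_finite (f i)) ->
  eventually_in_finite (fun k => \bigcup_i f i k).
Proof.
move=> fin_f.
have /choice[FN FN_spec] : forall i, exists FN : set X * nat,
    finite_set FN.1 /\ forall k, FN.2 <= k -> f i k `<=` FN.1.
  by move=> i; have [F [N FN_i]] := fin_f i; exists (F, N).
exists (\bigcup_i (FN i).1), (\max_i (FN i).2); split.
  by apply: bigcup_finite => [|i _]; [exact: finite_finset | exact: (FN_spec i).1].
move=> k Nk z [i _ fz]; exists i => //; apply: (FN_spec i).2 fz.
exact: leq_trans (leq_bigmax i) Nk.
Qed.

Definition escaping {X : Type} (u v : nat -> set X) : Prop :=
  forall F N, finite_set F -> exists k, N <= k /\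
    ~ u k `<=` F /\ ~ v k `<=` F /\ ~ symdiff (u k) (v k) `<=` F.

Definition has_lin_indep_subsequence {X : Type} (u v : nat -> set X) : Prop :=
  exists km : nat -> nat, {homo km : m m' / m < m'} /\
    lin_indep (join_fam (u \o km) (v \o km)).

Section GreedySubsequence.
Variables (X : Type) (u v : nat -> set X) (g : set X -> nat -> nat).
Hypothesis fin_u : forall k, finite_set (u k).
Hypothesis fin_v : forall k, finite_set (v k).
Hypothesis g_escapes : forall F N, finite_set F -> N <= g F N /\
  ~ u (g F N) `<=` F /\ ~ v (g F N) `<=` F /\ ~ symdiff (u (g F N)) (v (g F N)) `<=` F.

(* The first component bounds the next pick from below, the second is the
   union of all u k, v k picked so far. *)
Fixpoint escape_stage m : nat * set X :=
  if m is m'.+1 then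
    let s := escape_stage m' in let k := g s.2 s.1 in (k.+1, s.2 `|` (u k `|` v k))
  else (0, set0).

Definition escape_pick m := g (escape_stage m).2 (escape_stage m).1.

Lemma escape_stage_finite m : finite_set (escape_stage m).2.
Proof.
elim: m => [|m IH]; first exact: finite_set0.
by rewrite /= !finite_setU.
Qed.

Lemma escape_pick_lt m : escape_pick m < escape_pick m.+1.
Proof. exact: (g_escapes _ (escape_stage_finite m.+1)).1. Qed.

Lemma escape_pick_sub_stage i m : i < m ->
  u (escape_pick i) `<=` (escape_stage m).2 /\ v (escape_pick i) `<=` (escape_stage m).2.
Proof.
elim: m => // m IH; rewrite ltnS leq_eqVlt => /orP[/eqP->|/IH[ui vi]] /=.
  by split => z iz; right; [left|right].
by split => z iz; left; [apply: ui|apply: vi].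
Qed.

Lemma lin_indep_escape_pick :
  lin_indep (join_fam (u \o escape_pick) (v \o escape_pick)).
Proof.
apply: lin_indep_belowP; elim => [[|i s] _ // _ /allP/(_ i (mem_head i s))//|m IH].
have [_ [nu [nv nuv]]] := g_escapes (escape_stage m).1 (escape_stage_finite m).
apply: (lin_indep_below_step (F := (escape_stage m).2) IH) => //.
by case=> k /escape_pick_sub_stage[].
Qed.

End GreedySubsequence.

Lemma symdiff_sub_bigcup_setI (X I : Type) (A B : set X) (P : I -> set X) :
  (forall z, exists i, P i z) ->
  symdiff A B `<=` \bigcup_i symdiff (A `&` P i) (B `&` P i).
Proof.
move=> cover z ABz; have [i Piz] := cover z; exists i => //.
by case: ABz => -[in_z nin_z]; [left|right]; split => // -[].
Qed.

Lemma escaping_has_lin_indep_subsequence (X : Type) (u v : nat -> set X) :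
  (forall k, finite_set (u k)) -> (forall k, finite_set (v k)) ->
  escaping u v -> has_lin_indep_subsequence u v.
Proof.
move=> fin_u fin_v escape.
have /choice[g g_escapes] : forall FN : set X * nat, exists k, finite_set FN.1 ->
    FN.2 <= k /\ ~ u k `<=` FN.1 /\ ~ v k `<=` FN.1 /\ ~ symdiff (u k) (v k) `<=` FN.1.
  case=> F N /=; have [finF|infF] := pselect (finite_set F); last by exists 0 => /infF.
  by have [k ?] := escape F N finF; exists k.
have {}g_escapes F N := g_escapes (F, N).
exists (escape_pick u v (fun F N => g (F, N))); split.
  exact: homo_ltn ltn_trans (escape_pick_lt fin_u fin_v g_escapes).
exact: lin_indep_escape_pick fin_u fin_v g_escapes.
Qed.

Lemma lin_indep_subsequence_or_eventually_in_finite (X : Type) (u v : nat -> set X) :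
  (forall k, finite_set (u k)) -> (forall k, finite_set (v k)) ->
  lin_indep u -> lin_indep v ->
  has_lin_indep_subsequence u v \/ eventually_in_finite (fun k => symdiff (u k) (v k)).
Proof.
move=> fin_u fin_v indep_u indep_v.
have [|not_ev] := pselect (eventually_in_finite (fun k => symdiff (u k) (v k))).
  by right.
left.
apply: escaping_has_lin_indep_subsequence => // F N finF.
have [Mu esc_u] := injective_eventually_not_sub (lin_indep_inj indep_u) finF.
have [Mv esc_v] := injective_eventually_not_sub (lin_indep_inj indep_v) finF.
have [k [Nk esc_uv]] : exists k, maxn N (maxn Mu Mv) <= k /\ ~ symdiff (u k) (v k) `<=` F.
  apply: contra_notP not_ev => no_k; exists F, (maxn N (maxn Mu Mv)); split => // k Nk.
  by apply: contra_notP no_k => ?; exists k.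
move: Nk; rewrite !geq_max => /and3P[Nk Muk Mvk].
by exists k; split; [|split; [exact: esc_u|split; [exact: esc_v|]]].
Qed.

Theorem mainTheorem2 (X : Type) (n : nat) (P : 'I_n.+1 -> set X)
  (x y : nat -> set X) :
  infinite_set (@setT X) ->
  is_partition P ->
  (forall k, finite_set (x k)) -> (forall k, finite_set (y k)) ->
  lin_indep (join_fam x y) ->
  (forall p, lin_indep (fun k => x k `&` P p) /\ lin_indep (fun k => y k `&` P p)) ->
  exists (km : nat -> nat) (n0 : 'I_n.+1),
    (forall m m', (m < m')%N -> (km m < km m')%N) /\
    lin_indep (join_fam (fun m => x (km m) `&` P n0) (fun m => y (km m) `&` P n0)).
Proof.
move=> _ [_ [_ cover]] fin_x fin_y indep_xy indep_parts.
have [[n0 [km km_spec]]|no_part] := pselect (exists n0,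
    has_lin_indep_subsequence (fun k => x k `&` P n0) (fun k => y k `&` P n0)).
  by exists km, n0.
have parts_ev p : eventually_in_finite (fun k => symdiff (x k `&` P p) (y k `&` P p)).
  have [sub|//] := lin_indep_subsequence_or_eventually_in_finite
    (fun k => finite_setIl (P p) (fin_x k)) (fun k => finite_setIl (P p) (fin_y k))
    (indep_parts p).1 (indep_parts p).2.
  by exfalso; apply: no_part; exists p.
exfalso; have := eventually_in_finite_bigcup parts_ev.
move/(eventually_in_finite_sub (fun k => @symdiff_sub_bigcup_setI _ _ (x k) (y k) _ cover)).
exact: injective_not_eventually_in_finite (lin_indep_join_symdiff_inj indep_xy).
Qed.
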